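(* Let $m\in\mathbb Z\setminus\{0\}$, $\xi\in\mathbb Z_m$ and $\Gamma=\widetilde{BS}(m,\xi)$. Then for every automorphism $\varphi$ of $\Gamma$, the group $\Gamma$ has infinitely many $\varphi$-twisted conjugacy classes.
   Context: $\mathbb Z_m$ is the ring of $m$-adic integers. The functions $r_i$: $r_0(\xi)=0$, $s_0(\xi)=1$, and for $i\ge1$, $r_i(\xi)\in\{0,\dots,|m|-1\}$, $s_i(\xi)\in\mathbb Z_m$ unique with $\xi s_{i-1}(\xi)=ms_i(\xi)+r_i(\xi)$. Let $E$ be the free abelian group with basis $e_0,e_1,\dots$, $E_{m,\xi}\le E$ with basis $me_0,\ e_i-r_i(\xi)e_0$ ($i\ge1$), $E_1\le E$ with basis $e_1,e_2,\dots$, and $\phi:E_{m,\xi}\to E_1$ the isomorphism $\phi(me_0)=e_1$, $\phi(e_i-r_i(\xi)e_0)=e_{i+1}$. $\widetilde{BS}(m,\xi)=\langle E,a\mid axa^{-1}=\phi(x)\ \forall x\in E_{m,\xi}\rangle$. Two elements $\gamma,\gamma'$ of a group $G$ are $\varphi$-twisted conjugate ($\varphi\in\mathrm{Aut}(G)$) if $\gamma'=g\gamma\varphi(g)^{-1}$ for some $g\in G$; the classes of this equivalence relation are the $\varphi$-twisted conjugacy classes. *)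

From Stdlib Require Import ZArith List.
Import ListNotations.
Open Scope Z_scope.

(* ---------- m-adic integers ----------
   Z_m = inverse limit of Z / |m|^k Z.  An element is a compatible sequence
   of normalized residues x k in [0, |m|^k). *)
Record Zadic (m : Z) := {
  zres : nat -> Z;
  zres_range : forall k : nat, 0 <= zres k < Z.abs m ^ Z.of_nat k;
  zres_compat : forall k : nat, zres (S k) mod (Z.abs m ^ Z.of_nat k) = zres k
}.
Arguments zres {m} _ _.

Definition modk (m : Z) (k : nat) (z : Z) : Z := z mod (Z.abs m ^ Z.of_nat k).
Definition one_raw (m : Z) : nat -> Z := fun k => modk m k 1.
Definition mul_raw (m : Z) (x y : nat -> Z) : nat -> Z :=
  fun k => modk m k (x k * y k).
(* the digit r in {0,..,|m|-1} with y = m s + r : the residue of y mod |m| *)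
Definition digit_raw (m : Z) (y : nat -> Z) : Z := y 1%nat mod Z.abs m.
(* the unique s with y = m s + r (exact division, y - r divisible by m) *)
Definition divm_raw (m : Z) (y : nat -> Z) (r : Z) : nat -> Z :=
  fun k => modk m k ((y (S k) - r) / m).

(* (r_i(xi), s_i(xi)) : s_0 = 1, and xi * s_{i-1} = m s_i + r_i. *)
Fixpoint rs (m : Z) (xi : nat -> Z) (i : nat) : Z * (nat -> Z) :=
  match i with
  | O => (0, one_raw m)
  | S j => let y := mul_raw m xi (snd (rs m xi j)) in
           let r := digit_raw m y in (r, divm_raw m y r)
  end.

Definition rfun (m : Z) (xi : Zadic m) (i : nat) : Z := fst (rs m (zres xi) i).

Inductive gen : Type := Egen (i : nat) | Agen.
(* a letter is a generator with an exponent sign: false = g, true = g^-1 *)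
Definition letter : Type := (gen * bool)%type.
Definition word : Type := list letter.

Definition linv (l : letter) : letter := (fst l, negb (snd l)).
Definition winv (w : word) : word := rev (map linv w).

Definition epow (i : nat) (k : Z) : word :=
  if k <? 0 then repeat (Egen i, true) (Z.to_nat (- k))
  else repeat (Egen i, false) (Z.to_nat k).

(* For x = c_0 (m e_0) + sum_{j>=1} c_j (e_j - r_j e_0) in E_{m,xi},
   given by its coefficient list [c_0; c_1; ...; c_n] in that basis:
   a word for x, and a word for phi(x) = c_0 e_1 + sum_j c_j e_{j+1}. *)
Fixpoint xw_aux (r : nat -> Z) (j : nat) (cs : list Z) : word :=
  match cs with
  | [] => []
  | c :: cs' => epow j c ++ epow 0 (- (r j) * c) ++ xw_aux r (S j) cs'
  end.
Definition xword (m : Z) (r : nat -> Z) (cs : list Z) : word :=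
  match cs with
  | [] => []
  | c0 :: cs' => epow 0 (m * c0) ++ xw_aux r 1 cs'
  end.
Fixpoint phw_aux (j : nat) (cs : list Z) : word :=
  match cs with
  | [] => []
  | c :: cs' => epow (S j) c ++ phw_aux (S j) cs'
  end.
Definition phiword (cs : list Z) : word :=
  match cs with
  | [] => []
  | c0 :: cs' => epow 1 c0 ++ phw_aux 1 cs'
  end.

(* Equality in BS~(m, xi): the congruence on words generated by free
   cancellation, commutativity of E (free abelian on e_0, e_1, ...), and
   a x a^-1 = phi(x) for all x in E_{m,xi}. *)
Inductive bs_eq (m : Z) (r : nat -> Z) : word -> word -> Prop :=
  | bs_refl : forall u, bs_eq m r u u
  | bs_sym : forall u v, bs_eq m r u v -> bs_eq m r v u
  | bs_trans : forall u v w, bs_eq m r u v -> bs_eq m r v w -> bs_eq m r u w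
  | bs_ctx : forall p u v q, bs_eq m r u v -> bs_eq m r (p ++ u ++ q) (p ++ v ++ q)
  | bs_free : forall l : letter, bs_eq m r [l; linv l] []
  | bs_comm : forall i j : nat,
      bs_eq m r [(Egen i, false); (Egen j, false)] [(Egen j, false); (Egen i, false)]
  | bs_hnn : forall cs : list Z,
      bs_eq m r ([(Agen, false)] ++ xword m r cs ++ [(Agen, true)]) (phiword cs).

Definition BSeq (m : Z) (xi : Zadic m) : word -> word -> Prop := bs_eq m (rfun m xi).

Record is_aut (m : Z) (xi : Zadic m) (f : word -> word) : Prop := {
  aut_wd : forall u v, BSeq m xi u v -> BSeq m xi (f u) (f v);
  aut_hom : forall u v, BSeq m xi (f (u ++ v)) (f u ++ f v);
  aut_inj : forall u v, BSeq m xi (f u) (f v) -> BSeq m xi u v;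
  aut_surj : forall v, exists u, BSeq m xi (f u) v
}.

Definition twisted_conj (m : Z) (xi : Zadic m) (f : word -> word)
  (gamma gamma' : word) : Prop :=
  exists g : word, BSeq m xi gamma' (g ++ gamma ++ winv (f g)).

(* Words are evaluated in G = (R x Z^2) x| Z, where the generator of Z doubles R and rotates
   Z^2 by a quarter turn, e_0 |-> (1, (1, 0)), a |-> the generator, and the images of the other
   e_i are forced by the relations; homomorphisms out of BS~(m, xi) are determined by their
   values on a and e_0.  Let phi be an automorphism.  The height (the Z-coordinate) of phi(e_0)
   is 0: otherwise the images of all generators would be affine maps of R sharing the fixed
   point of phi(e_0^m), while the image of phi contains the translation e_0.  Hence
   height o phi = eps * height with eps = +-1.  For eps = 1 the height is a twisted-conjugacy
   invariant separating the powers a^N.  For eps = -1, on the quotient Z^2 x| Z the map phi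
   becomes an endomorphism v |-> U v, a |-> (b, -1) with U an integral orthogonal reflection,
   and the elements e_0^N a e_0^(2N) a^-1, which map to (N, 2N), lie in pairwise distinct
   twisted classes. *)

From Stdlib Require Import ZArith List Reals Lra Lia Classical.
Import ListNotations.
Open Scope Z_scope.

(** * Quarter turns and powers of two *)

Definition qcos (k : Z) : Z := match k mod 4 with 0 => 1 | 2 => -1 | _ => 0 end.
Definition qsin (k : Z) : Z := match k mod 4 with 1 => 1 | 3 => -1 | _ => 0 end.

(* [qcos_sum k = \sum_(0 <= j < k) qcos (- j)], and likewise for [qsin_sum]. *)
Definition qcos_sum (k : Z) : Z := match k mod 4 with 1 | 2 => 1 | _ => 0 end.
Definition qsin_sum (k : Z) : Z := match k mod 4 with 2 | 3 => -1 | _ => 0 end.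

Lemma mod4_cases (k : Z) : k mod 4 = 0 \/ k mod 4 = 1 \/ k mod 4 = 2 \/ k mod 4 = 3.
Proof. pose proof (Z.mod_pos_bound k 4). lia. Qed.

Ltac by_residues_mod4 k1 k2 :=
  rewrite ?(Zplus_mod k1 k2);
  destruct (mod4_cases k1) as [-> | [-> | [-> | ->]]];
  destruct (mod4_cases k2) as [-> | [-> | [-> | ->]]]; reflexivity.

Lemma qcosD (k1 k2 : Z) : qcos (k1 + k2) = qcos k1 * qcos k2 - qsin k1 * qsin k2.
Proof. unfold qcos, qsin. by_residues_mod4 k1 k2. Qed.

Lemma qsinD (k1 k2 : Z) : qsin (k1 + k2) = qsin k1 * qcos k2 + qcos k1 * qsin k2.
Proof. unfold qcos, qsin. by_residues_mod4 k1 k2. Qed.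

Lemma qcos_sumD (k1 k2 : Z) :
  qcos_sum (k1 + k2) = qcos_sum k1 + qcos k1 * qcos_sum k2 + qsin k1 * qsin_sum k2.
Proof. unfold qcos, qsin, qcos_sum, qsin_sum. by_residues_mod4 k1 k2. Qed.

Lemma qsin_sumD (k1 k2 : Z) :
  qsin_sum (k1 + k2) = qsin_sum k1 + qcos k1 * qsin_sum k2 - qsin k1 * qcos_sum k2.
Proof. unfold qcos, qsin, qcos_sum, qsin_sum. by_residues_mod4 k1 k2. Qed.

Lemma qcosN (k : Z) : qcos (- k) = qcos k.
Proof.
  unfold qcos. rewrite <- Z.sub_0_l, Zminus_mod.
  destruct (mod4_cases k) as [-> | [-> | [-> | ->]]]; reflexivity.
Qed.

Lemma qsinN (k : Z) : qsin (- k) = - qsin k.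
Proof.
  unfold qsin. rewrite <- Z.sub_0_l, Zminus_mod.
  destruct (mod4_cases k) as [-> | [-> | [-> | ->]]]; reflexivity.
Qed.

Definition rot_y (k y z : Z) : Z := qcos k * y - qsin k * z.
Definition rot_z (k y z : Z) : Z := qsin k * y + qcos k * z.

Lemma rot_y_comp (k k' y z : Z) : rot_y k (rot_y k' y z) (rot_z k' y z) = rot_y (k + k') y z.
Proof. unfold rot_y, rot_z. rewrite qcosD, qsinD. ring. Qed.

Lemma rot_z_comp (k k' y z : Z) : rot_z k (rot_y k' y z) (rot_z k' y z) = rot_z (k + k') y z.
Proof. unfold rot_y, rot_z. rewrite qcosD, qsinD. ring. Qed.

Lemma rot_y0 (y z : Z) : rot_y 0 y z = y.
Proof. unfold rot_y. change (qcos 0) with 1; change (qsin 0) with 0. ring. Qed.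

Lemma rot_z0 (y z : Z) : rot_z 0 y z = z.
Proof. unfold rot_z. change (qcos 0) with 1; change (qsin 0) with 0. ring. Qed.

Definition p2 (k : Z) : R := powerRZ 2 k.

Lemma p2D (a b : Z) : p2 (a + b) = (p2 a * p2 b)%R.
Proof. apply powerRZ_add. lra. Qed.

Lemma p2_0 : p2 0 = 1%R. Proof. reflexivity. Qed.

Lemma p2_1 : p2 1 = 2%R. Proof. unfold p2. simpl. ring. Qed.

Lemma p2_mulN (k : Z) : (p2 k * p2 (- k))%R = 1%R.
Proof. rewrite <- p2D, Z.add_opp_diag_r. reflexivity. Qed.

Lemma p2_eq1 (k : Z) : p2 k = 1%R -> k = 0.
Proof.
  assert (big : forall p, (1 < p2 (Z.pos p))%R).
  { intro p. unfold p2. simpl. apply Rlt_pow_R1; [lra | lia]. }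
  intro H. destruct k as [| p | p]; [reflexivity | |].
  - specialize (big p). lra.
  - pose proof (p2_mulN (Z.neg p)) as E. rewrite H in E.
    change (- Z.neg p) with (Z.pos p) in E. specialize (big p). nra.
Qed.

Arguments qcos : simpl never.
Arguments qsin : simpl never.
Arguments qcos_sum : simpl never.
Arguments qsin_sum : simpl never.
Arguments p2 : simpl never.
Arguments rot_y : simpl never.
Arguments rot_z : simpl never.

(** * Groups and homomorphisms defined on words *)

Record group : Type := Group {
  carrier :> Type;
  gmul : carrier -> carrier -> carrier;
  gone : carrier;
  ginv : carrier -> carrier;
  gmulA : forall a b c, gmul a (gmul b c) = gmul (gmul a b) c;
  gmul1g : forall a, gmul gone a = a;
  gmulg1 : forall a, gmul a gone = a;
  gmulVg : forall a, gmul (ginv a) a = gone;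
  gmulgV : forall a, gmul a (ginv a) = gone
}.
Arguments gmul {g}.
Arguments gone {g}.
Arguments ginv {g}.

Section GroupFacts.
Variable G : group.

Lemma ginv_uniq (a b : G) : gmul a b = gone -> b = ginv a.
Proof.
  intro E. rewrite <- (gmul1g _ b), <- (gmulVg _ a), <- gmulA, E, gmulg1. reflexivity.
Qed.

Lemma gmul_idem_one (a : G) : gmul a a = a -> a = gone.
Proof.
  intro E. transitivity (gmul (ginv a) (gmul a a)).
  - rewrite gmulA, gmulVg, gmul1g. reflexivity.
  - rewrite E. apply gmulVg.
Qed.

Lemma ginvM (a b : G) : ginv (gmul a b) = gmul (ginv b) (ginv a).
Proof.
  symmetry. apply ginv_uniq.
  rewrite <- gmulA, (gmulA _ b), gmulgV, gmul1g, gmulgV. reflexivity.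
Qed.

Lemma ginvK (a : G) : ginv (ginv a) = a.
Proof. symmetry. apply ginv_uniq. apply gmulVg. Qed.

End GroupFacts.

Definition group_hom {G H : group} (psi : G -> H) : Prop :=
  forall a b, psi (gmul a b) = gmul (psi a) (psi b).

Lemma hom_one {G H : group} (psi : G -> H) : group_hom psi -> psi gone = gone.
Proof. intro hpsi. apply gmul_idem_one. rewrite <- hpsi, gmul1g. reflexivity. Qed.

Lemma hom_inv {G H : group} (psi : G -> H) (a : G) : group_hom psi -> psi (ginv a) = ginv (psi a).
Proof. intro hpsi. apply ginv_uniq. rewrite <- hpsi, gmulgV. apply hom_one, hpsi. Qed.

Lemma twisted_conj_shift (G : group) (phi : G -> G) (a1 a2 t1 t2 : G) :
  group_hom phi ->
  gmul a1 (gmul t1 (ginv (phi a1))) = gmul a2 (gmul t2 (ginv (phi a2))) ->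
  t2 = gmul (gmul (ginv a2) a1) (gmul t1 (ginv (phi (gmul (ginv a2) a1)))).
Proof.
  intros hphi E.
  assert (Hphi : ginv (phi (gmul (ginv a2) a1)) = gmul (ginv (phi a1)) (phi a2)).
  { rewrite hphi, (hom_inv phi _ hphi), ginvM, ginvK. reflexivity. }
  rewrite Hphi. transitivity (gmul (ginv a2) (gmul (gmul a2 (gmul t2 (ginv (phi a2)))) (phi a2))).
  - rewrite <- !gmulA, gmulVg, gmulg1, gmulA, gmulVg, gmul1g. reflexivity.
  - rewrite <- E, <- !gmulA. reflexivity.
Qed.

Definition Zadd_group : group :=
  Group Z Z.add 0 Z.opp Z.add_assoc Z.add_0_l Z.add_0_r Z.add_opp_diag_l Z.add_opp_diag_r.

Definition ee (i : nat) : letter := (Egen i, false).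
Definition ea : letter := (Agen, false).

Lemma in_epow (i : nat) (n : Z) (l : letter) : In l (epow i n) -> fst l = Egen i.
Proof. unfold epow. destruct (n <? 0); intro H; apply repeat_spec in H; subst; reflexivity. Qed.

Section WordHom.
Variables (m : Z) (r : nat -> Z).

Lemma bs_eq_e1 : bs_eq m r ([ea] ++ epow 0 m ++ [linv ea]) [ee 1].
Proof.
  pose proof (bs_hnn m r [1]) as H. cbn [xword xw_aux phiword phw_aux] in H.
  rewrite Z.mul_1_r, app_nil_r in H. exact H.
Qed.

Lemma xw_aux_unit (k j : nat) :
  xw_aux r k (repeat 0 j ++ [1]) = [ee (k + j)] ++ epow 0 (- r (k + j)%nat).
Proof.
  revert k; induction j as [| j IH]; intro k; cbn.
  - rewrite Nat.add_0_r, Z.mul_1_r, app_nil_r. reflexivity.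
  - rewrite Z.mul_0_r, IH, Nat.add_succ_r. reflexivity.
Qed.

Lemma phw_aux_unit (k j : nat) : phw_aux k (repeat 0 j ++ [1]) = [ee (S (k + j))].
Proof.
  revert k; induction j as [| j IH]; intro k; cbn.
  - rewrite Nat.add_0_r. reflexivity.
  - rewrite IH, Nat.add_succ_r. reflexivity.
Qed.

Lemma bs_eq_eS (j : nat) :
  bs_eq m r ([ea; ee (S j)] ++ epow 0 (- r (S j)) ++ [linv ea]) [ee (S (S j))].
Proof.
  pose proof (bs_hnn m r (0 :: repeat 0 j ++ [1])) as H.
  unfold xword, phiword in H. rewrite xw_aux_unit, phw_aux_unit, Z.mul_0_r in H. exact H.
Qed.

Variable G : group.

Record word_hom (h : word -> G) : Prop := WordHom {
  word_hom_resp : forall u v, bs_eq m r u v -> h u = h v;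
  word_hom_app : forall u v, h (u ++ v) = gmul (h u) (h v)
}.

Section OneHom.
Variables (h : word -> G) (hh : word_hom h).

Lemma word_hom_nil : h [] = gone.
Proof. apply gmul_idem_one. rewrite <- word_hom_app by exact hh. reflexivity. Qed.

Lemma word_hom_cons (l : letter) (w : word) : h (l :: w) = gmul (h [l]) (h w).
Proof. apply (word_hom_app _ hh [l]). Qed.

Lemma word_hom_linv (l : letter) : h [linv l] = ginv (h [l]).
Proof.
  apply ginv_uniq. rewrite <- word_hom_app by exact hh. rewrite <- word_hom_nil.
  apply (word_hom_resp _ hh), bs_free.
Qed.

Lemma word_hom_winv (w : word) : h (winv w) = ginv (h w).
Proof.
  induction w as [| l w IH].
  - cbn. rewrite word_hom_nil. apply ginv_uniq, gmulg1.
  - unfold winv in *. cbn [map rev].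
    rewrite (word_hom_app _ hh), IH, word_hom_linv, (word_hom_cons l w).
    symmetry. apply ginvM.
Qed.

Lemma word_hom_closed (P : G -> Prop) :
  P gone -> (forall a b, P a -> P b -> P (gmul a b)) -> (forall a, P a -> P (ginv a)) ->
  forall w : word, (forall g b, In (g, b) w -> P (h [(g, false)])) -> P (h w).
Proof.
  intros P1 PM PV w. induction w as [| [g b] w IH]; intro Hw.
  - rewrite word_hom_nil. exact P1.
  - rewrite word_hom_cons. apply PM.
    + specialize (Hw g b (or_introl eq_refl)).
      destruct b; [| exact Hw].
      change (g, true) with (linv (g, false)). rewrite word_hom_linv. apply PV, Hw.
    + apply IH. intros g' b' Hin. apply (Hw g' b'). right. exact Hin.
Qed.

End OneHom.

(* The group is generated by [a] and [e_0]: every [e_(i+1)] is a conjugate by [a]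
   of a word in [e_i] and [e_0]. *)
Lemma word_hom_ext (h1 h2 : word -> G) :
  word_hom h1 -> word_hom h2 -> h1 [ea] = h2 [ea] -> h1 [ee 0] = h2 [ee 0] ->
  forall w, h1 w = h2 w.
Proof.
  intros hh1 hh2 Ha H0.
  pose (agree := fun w => h1 w = h2 w).
  assert (Hword : forall w, (forall g b, In (g, b) w -> agree [(g, false)]) -> agree w).
  { intro w. induction w as [| [g b] w IH]; intro Hw.
    - unfold agree. rewrite !word_hom_nil by assumption. reflexivity.
    - unfold agree. rewrite (word_hom_cons h1), (word_hom_cons h2) by assumption.
      f_equal; [| apply IH; intros g' b' Hin; apply (Hw g' b'); right; exact Hin].
      specialize (Hw g b (or_introl eq_refl)).
      destruct b; [| exact Hw].
      change (g, true) with (linv (g, false)). rewrite !word_hom_linv by assumption.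
      f_equal. exact Hw. }
  assert (Hrel : forall w i, bs_eq m r w [ee i] -> agree w -> agree [ee i]).
  { intros w i Hw Hagree. unfold agree.
    rewrite <- (word_hom_resp _ hh1 _ _ Hw), <- (word_hom_resp _ hh2 _ _ Hw). exact Hagree. }
  assert (He : forall i, agree [ee i]).
  { intro i. induction i as [| [| j] IH]; [exact H0 | |].
    - apply (Hrel _ _ bs_eq_e1). apply Hword. intros g b Hin.
      apply in_app_or in Hin as [[E | []] | Hin]; [injection E as <- _; exact Ha |].
      apply in_app_or in Hin as [Hin | [E | []]]; [| injection E as <- _; exact Ha].
      apply in_epow in Hin. cbn in Hin. subst g. exact H0.
    - apply (Hrel _ _ (bs_eq_eS j)). apply Hword. intros g b Hin.
      apply in_app_or in Hin as [[E | [E | []]] | Hin];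
        [injection E as <- _; exact Ha | injection E as <- _; exact IH |].
      apply in_app_or in Hin as [Hin | [E | []]]; [| injection E as <- _; exact Ha].
      apply in_epow in Hin. cbn in Hin. subst g. exact H0. }
  intro w. apply Hword. intros [i |] b _; [exact (He i) | exact Ha].
Qed.

End WordHom.

Arguments word_hom_resp {m r G h}.
Arguments word_hom_app {m r G h}.
Arguments word_hom_nil {m r G h}.
Arguments word_hom_cons {m r G h}.
Arguments word_hom_linv {m r G h}.
Arguments word_hom_winv {m r G h}.
Arguments word_hom_closed {m r G h}.

Lemma word_hom_comp (m : Z) (r : nat -> Z) (G H : group) (h : word -> G) (psi : G -> H) :
  word_hom m r G h -> group_hom psi -> word_hom m r H (fun w => psi (h w)).
Proof.
  intros hh hpsi. split.
  - intros u v Huv. rewrite (word_hom_resp hh _ _ Huv). reflexivity.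
  - intros u v. rewrite (word_hom_app hh). apply hpsi.
Qed.


Lemma word_hom_repeat (m : Z) (r : nat -> Z) (h : word -> Zadd_group) (l : letter) (n : nat) :
  word_hom m r Zadd_group h -> h (repeat l n) = Z.of_nat n * h [l].
Proof.
  intro hh. induction n as [| n IH].
  - apply (word_hom_nil hh).
  - cbn [repeat]. rewrite (word_hom_cons hh), IH, Nat2Z.inj_succ. cbn. ring.
Qed.

Lemma word_hom_epow (m : Z) (r : nat -> Z) (h : word -> Zadd_group) (i : nat) (n : Z) :
  word_hom m r Zadd_group h -> h (epow i n) = n * h [ee i].
Proof.
  intro hh. unfold epow. destruct (Z.ltb_spec n 0).
  - rewrite (word_hom_repeat _ _ _ _ _ hh). change (Egen i, true) with (linv (ee i)).
    rewrite (word_hom_linv hh), Z2Nat.id by lia. cbn. ring.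
  - rewrite (word_hom_repeat _ _ _ _ _ hh), Z2Nat.id by lia. reflexivity.
Qed.

Section Evaluation.
Variables (m : Z) (r : nat -> Z) (G : group) (val : gen -> G).

Definition eval_letter (l : letter) : G := if snd l then ginv (val (fst l)) else val (fst l).

Fixpoint eval (w : word) : G :=
  match w with
  | [] => gone
  | l :: w' => gmul (eval_letter l) (eval w')
  end.

Lemma eval_app (u v : word) : eval (u ++ v) = gmul (eval u) (eval v).
Proof.
  induction u as [| l u IH]; cbn.
  - symmetry. apply gmul1g.
  - rewrite IH. apply gmulA.
Qed.

Lemma eval_letter_linv (l : letter) : eval_letter (linv l) = ginv (eval_letter l).
Proof. destruct l as [g []]; cbn; [symmetry; apply ginvK | reflexivity]. Qed.

Lemma eval_word_hom :
  (forall i j, gmul (val (Egen i)) (val (Egen j)) = gmul (val (Egen j)) (val (Egen i))) ->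
  (forall cs, eval ([(Agen, false)] ++ xword m r cs ++ [(Agen, true)]) = eval (phiword cs)) ->
  word_hom m r G eval.
Proof.
  intros Hcomm Hhnn. split; [| exact eval_app].
  induction 1 as [| u v _ IH | u v w _ IH1 _ IH2 | p u v q _ IH | l | i j | cs].
  - reflexivity.
  - symmetry. exact IH.
  - congruence.
  - rewrite !eval_app, IH. reflexivity.
  - cbn. rewrite gmulg1, eval_letter_linv. apply gmulgV.
  - cbn. rewrite !gmulg1. apply Hcomm.
  - apply Hhnn.
Qed.

End Evaluation.

Arguments eval_letter {G}.
Arguments eval {G}.
Arguments eval_app {G}.
Arguments eval_word_hom m r {G}.

(** * The target group *)

(* [(R x Z^2) x| Z]: the generator of [Z] acts by [(x, v) |-> (2 x, rho v)], with [rho]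
   the quarter turn of [Z^2]; [sk] is the height. *)
Record sdp : Type := Sdp { sx : R; sy : Z; sz : Z; sk : Z }.

Definition sdp_mul (g h : sdp) : sdp :=
  Sdp (sx g + p2 (sk g) * sx h)%R (sy g + rot_y (sk g) (sy h) (sz h))
      (sz g + rot_z (sk g) (sy h) (sz h)) (sk g + sk h).
Definition sdp_one : sdp := Sdp 0 0 0 0.
Definition sdp_inv (g : sdp) : sdp :=
  Sdp (- (p2 (- sk g) * sx g))%R (- rot_y (- sk g) (sy g) (sz g))
      (- rot_z (- sk g) (sy g) (sz g)) (- sk g).

Lemma sdp_ext (g h : sdp) : sx g = sx h -> sy g = sy h -> sz g = sz h -> sk g = sk h -> g = h.
Proof. destruct g, h; cbn; intros; subst; reflexivity. Qed.

Lemma sdp_mulA (a b c : sdp) : sdp_mul a (sdp_mul b c) = sdp_mul (sdp_mul a b) c.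
Proof.
  apply sdp_ext; cbn.
  - rewrite p2D. ring.
  - rewrite <- rot_y_comp. unfold rot_y, rot_z. ring.
  - rewrite <- rot_z_comp. unfold rot_y, rot_z. ring.
  - ring.
Qed.

Lemma sdp_mul1g (a : sdp) : sdp_mul sdp_one a = a.
Proof. apply sdp_ext; cbn; rewrite ?p2_0, ?rot_y0, ?rot_z0; ring. Qed.

Lemma sdp_mulg1 (a : sdp) : sdp_mul a sdp_one = a.
Proof. apply sdp_ext; cbn; unfold rot_y, rot_z; ring. Qed.

Lemma sdp_mulVg (a : sdp) : sdp_mul (sdp_inv a) a = sdp_one.
Proof. apply sdp_ext; cbn; ring. Qed.

Lemma rot_yN (k y z : Z) : rot_y k (- y) (- z) = - rot_y k y z.
Proof. unfold rot_y. ring. Qed.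

Lemma rot_zN (k y z : Z) : rot_z k (- y) (- z) = - rot_z k y z.
Proof. unfold rot_z. ring. Qed.

Lemma sdp_mulgV (a : sdp) : sdp_mul a (sdp_inv a) = sdp_one.
Proof.
  apply sdp_ext; cbn.
  - replace (sx a + p2 (sk a) * - (p2 (- sk a) * sx a))%R
      with (sx a * (1 - p2 (sk a) * p2 (- sk a)))%R by ring.
    rewrite p2_mulN. ring.
  - rewrite rot_yN, rot_y_comp, Z.add_opp_diag_r, rot_y0. ring.
  - rewrite rot_zN, rot_z_comp, Z.add_opp_diag_r, rot_z0. ring.
  - ring.
Qed.

Definition sdp_group : group :=
  Group sdp sdp_mul sdp_one sdp_inv sdp_mulA sdp_mul1g sdp_mulg1 sdp_mulVg sdp_mulgV.

Lemma sk_hom : @group_hom sdp_group Zadd_group sk.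
Proof. intros a b. reflexivity. Qed.

Record vec : Type := Vec { va : Z; vb : Z; vc : Z }.

Definition vadd (s t : vec) : vec := Vec (va s + va t) (vb s + vb t) (vc s + vc t).
Definition vscale (c : Z) (t : vec) : vec := Vec (c * va t) (c * vb t) (c * vc t).
Definition vzero : vec := Vec 0 0 0.
Definition vec_e0 : vec := Vec 1 1 0.
(* [a t a^-1] for a translation [t] *)
Definition vtwist (t : vec) : vec := Vec (2 * va t) (- vc t) (vb t).

Lemma vec_ext (s t : vec) : va s = va t -> vb s = vb t -> vc s = vc t -> s = t.
Proof. destruct s, t; cbn; intros; subst; reflexivity. Qed.

Definition transl (t : vec) : sdp := Sdp (IZR (va t)) (vb t) (vc t) 0.

Ltac sdp_cbn :=
  cbn [sx sy sz sk sdp_mul sdp_inv sdp_one va vb vc transl vadd vscale vtwist vzero vec_e0] in *.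

Lemma transl_mul (s t : vec) : sdp_mul (transl s) (transl t) = transl (vadd s t).
Proof. apply sdp_ext; sdp_cbn; rewrite ?p2_0, ?rot_y0, ?rot_z0, ?plus_IZR; ring. Qed.

Lemma transl_inv (t : vec) : sdp_inv (transl t) = transl (vscale (-1) t).
Proof.
  apply sdp_ext; sdp_cbn; rewrite ?Z.opp_0, ?p2_0, ?rot_y0, ?rot_z0, ?mult_IZR; ring.
Qed.

Lemma transl_conj (t : vec) :
  sdp_mul (Sdp 0 0 0 1) (sdp_mul (transl t) (sdp_inv (Sdp 0 0 0 1))) = transl (vtwist t).
Proof.
  apply sdp_ext; sdp_cbn; rewrite ?Z.add_0_r, ?p2_0, ?p2_1, ?mult_IZR; unfold rot_y, rot_z;
    change (qcos 1) with 0; change (qsin 1) with 1; change (qcos 0) with 1; change (qsin 0) with 0;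
    ring.
Qed.

Section GeneratorImages.
Variables (m : Z) (r : nat -> Z).

(* [e_1 = a e_0^m a^-1] and [e_(j+2) = a e_(j+1) e_0^(- r_(j+1)) a^-1]. *)
Fixpoint gen_vec (i : nat) : vec :=
  match i with
  | O => vec_e0
  | S j => vtwist (match j with
                   | O => vscale m vec_e0
                   | S _ => vadd (gen_vec j) (vscale (- r j) vec_e0)
                   end)
  end.

Definition gen_val (g : gen) : sdp_group :=
  match g with Egen i => transl (gen_vec i) | Agen => Sdp 0 0 0 1 end.

Definition ev : word -> sdp_group := eval gen_val.

Lemma ev_repeat (i : nat) (b : bool) (n : nat) :
  ev (repeat (Egen i, b) n) = transl (vscale (if b then - Z.of_nat n else Z.of_nat n) (gen_vec i)).
Proof.
  induction n as [| n IH].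
  - apply sdp_ext; cbn; destruct b; reflexivity.
  - cbn [repeat ev eval]. fold (ev (repeat (Egen i, b) n)). rewrite IH.
    destruct b; cbn [eval_letter fst snd gen_val gmul ginv sdp_group];
      rewrite ?transl_inv, transl_mul; f_equal; apply vec_ext; sdp_cbn; lia.
Qed.

Lemma ev_epow (i : nat) (c : Z) : ev (epow i c) = transl (vscale c (gen_vec i)).
Proof.
  unfold epow. destruct (Z.ltb_spec c 0); rewrite ev_repeat, Z2Nat.id by lia.
  - rewrite Z.opp_involutive. reflexivity.
  - reflexivity.
Qed.

Fixpoint xword_vec (j : nat) (cs : list Z) : vec :=
  match cs with
  | [] => vzero
  | c :: cs' => vadd (vadd (vscale c (gen_vec j)) (vscale (- r j * c) vec_e0)) (xword_vec (S j) cs')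
  end.

Fixpoint phiword_vec (j : nat) (cs : list Z) : vec :=
  match cs with
  | [] => vzero
  | c :: cs' => vadd (vscale c (gen_vec (S j))) (phiword_vec (S j) cs')
  end.

Lemma ev_xw_aux (j : nat) (cs : list Z) : ev (xw_aux r j cs) = transl (xword_vec j cs).
Proof.
  revert j; induction cs as [| c cs IH]; intro j; [reflexivity |].
  cbn [xw_aux xword_vec]. unfold ev. rewrite !eval_app. fold ev.
  rewrite !ev_epow, IH. cbn [gmul sdp_group]. rewrite !transl_mul.
  change (gen_vec 0) with vec_e0. f_equal. apply vec_ext; sdp_cbn; ring.
Qed.

Lemma ev_phw_aux (j : nat) (cs : list Z) : ev (phw_aux j cs) = transl (phiword_vec j cs).
Proof.
  revert j; induction cs as [| c cs IH]; intro j; [reflexivity |].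
  cbn [phw_aux phiword_vec]. unfold ev. rewrite !eval_app. fold ev.
  rewrite ev_epow, IH. apply transl_mul.
Qed.

Lemma vtwist_xword_vec (j : nat) (cs : list Z) :
  (1 <= j)%nat -> vtwist (xword_vec j cs) = phiword_vec j cs.
Proof.
  revert j; induction cs as [| c cs IH]; intros j Hj; cbn [xword_vec phiword_vec].
  - apply vec_ext; sdp_cbn; ring.
  - rewrite <- IH by lia. destruct j as [| j]; [lia |].
    change (gen_vec (S (S j))) with (vtwist (vadd (gen_vec (S j)) (vscale (- r (S j)) vec_e0))).
    apply vec_ext; sdp_cbn; ring.
Qed.

Lemma ev_conj_a (w : word) (t : vec) :
  ev w = transl t -> ev ([(Agen, false)] ++ w ++ [(Agen, true)]) = transl (vtwist t).
Proof.
  intro H. unfold ev. rewrite !eval_app. fold ev. rewrite H. cbn.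
  rewrite !sdp_mulg1. apply transl_conj.
Qed.

Lemma ev_hnn (cs : list Z) :
  ev ([(Agen, false)] ++ xword m r cs ++ [(Agen, true)]) = ev (phiword cs).
Proof.
  destruct cs as [| c0 cs].
  - cbn. rewrite sdp_mulg1. apply sdp_mulgV.
  - unfold xword, phiword.
    rewrite (ev_conj_a _ (vadd (vscale (m * c0) vec_e0) (xword_vec 1 cs))).
    + unfold ev. rewrite eval_app. fold ev. rewrite ev_epow, ev_phw_aux.
      cbn [gmul sdp_group]. rewrite transl_mul, <- vtwist_xword_vec by lia.
      change (gen_vec 1) with (vtwist (vscale m vec_e0)).
      f_equal. apply vec_ext; sdp_cbn; ring.
    + unfold ev. rewrite eval_app. fold ev. rewrite ev_epow, ev_xw_aux. apply transl_mul.
Qed.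

Lemma ev_ea : ev [ea] = Sdp 0 0 0 1.
Proof. apply sdp_mulg1. Qed.

Lemma ev_e0 : ev [ee 0] = transl vec_e0.
Proof. apply sdp_mulg1. Qed.

Lemma ev_word_hom : word_hom m r sdp_group ev.
Proof.
  apply eval_word_hom; [| exact ev_hnn].
  intros i j. cbn. rewrite !transl_mul. f_equal. apply vec_ext; sdp_cbn; ring.
Qed.

End GeneratorImages.

(* The affine maps [t |-> 2^(sk g) t + sx g] and [t |-> 2^(sk h) t + sx h] commute. *)
Definition aff_commute (g h : sdp) : Prop :=
  (sx g * (1 - p2 (sk h)) = sx h * (1 - p2 (sk g)))%R.

Lemma aff_commute_of_commute (g h : sdp) : sdp_mul g h = sdp_mul h g -> aff_commute g h.
Proof. intro E. apply (f_equal sx) in E. unfold aff_commute. cbn in E. lra. Qed.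

Lemma aff_commute_one (h : sdp) : aff_commute sdp_one h.
Proof. unfold aff_commute. cbn. rewrite p2_0. ring. Qed.

Lemma aff_commute_mul (g1 g2 h : sdp) :
  aff_commute g1 h -> aff_commute g2 h -> aff_commute (sdp_mul g1 g2) h.
Proof.
  unfold aff_commute. cbn. intros H1 H2. rewrite p2D.
  transitivity (sx g1 * (1 - p2 (sk h)) + p2 (sk g1) * (sx g2 * (1 - p2 (sk h))))%R; [ring |].
  rewrite H1, H2. ring.
Qed.

Lemma aff_commute_inv (g h : sdp) : aff_commute g h -> aff_commute (sdp_inv g) h.
Proof.
  unfold aff_commute. cbn. intro H. pose proof (p2_mulN (sk g)) as E.
  transitivity (- p2 (- sk g) * (sx g * (1 - p2 (sk h))))%R; [ring |].
  rewrite H. transitivity (sx h * (p2 (sk g) * p2 (- sk g) - p2 (- sk g)))%R; [ring |].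
  rewrite E. ring.
Qed.

(* Maps commuting with a non-translation share its fixed point. *)
Lemma aff_commute_trans (x g1 g2 : sdp) :
  sk x <> 0 -> aff_commute g1 x -> aff_commute g2 x -> aff_commute g1 g2.
Proof.
  unfold aff_commute. intros Hx H1 H2.
  assert (Hs : (1 - p2 (sk x) <> 0)%R) by (intro E; apply Hx, p2_eq1; lra).
  apply (Rmult_eq_reg_r (1 - p2 (sk x))); [| exact Hs].
  transitivity ((sx g1 * (1 - p2 (sk x))) * (1 - p2 (sk g2)))%R; [ring |].
  rewrite H1. transitivity ((sx g2 * (1 - p2 (sk x))) * (1 - p2 (sk g1)))%R; [| ring].
  rewrite H2. ring.
Qed.

Lemma aff_commute_same_height (x g1 g2 : sdp) :
  sk x <> 0 -> aff_commute g1 x -> aff_commute g2 x -> sk g1 = sk g2 -> sx g1 = sx g2.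
Proof.
  unfold aff_commute. intros Hx H1 H2 E.
  assert (Hs : (1 - p2 (sk x) <> 0)%R) by (intro E'; apply Hx, p2_eq1; lra).
  rewrite E in H1. apply (Rmult_eq_reg_r (1 - p2 (sk x))); [lra | exact Hs].
Qed.

Definition proj_yz (g : sdp_group) : sdp_group := Sdp 0 (sy g) (sz g) (sk g).

Lemma proj_yz_hom : group_hom proj_yz.
Proof. intros a b. apply sdp_ext; cbn; ring. Qed.

(* The endomorphism of [Z^2 x| Z] (extended by [0] on [R]) sending [(v, 0)] to [(U v, 0)]
   and [(0, 1)] to [(b, -1)], where [U = [[u1, u2], [u2, -u1]]]. *)
Definition flip (u1 u2 b1 b2 : Z) (g : sdp_group) : sdp_group :=
  Sdp 0 (u1 * sy g + u2 * sz g + (b1 * qcos_sum (sk g) - b2 * qsin_sum (sk g)))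
        (u2 * sy g - u1 * sz g + (b1 * qsin_sum (sk g) + b2 * qcos_sum (sk g))) (- sk g).

Lemma flip_hom (u1 u2 b1 b2 : Z) : group_hom (flip u1 u2 b1 b2).
Proof.
  intros g h. apply sdp_ext; cbn.
  - ring.
  - unfold rot_y, rot_z. rewrite qcosN, qsinN, qcos_sumD, qsin_sumD. ring.
  - unfold rot_y, rot_z. rewrite qcosN, qsinN, qcos_sumD, qsin_sumD. ring.
  - ring.
Qed.

(* The points [(N, 2 N)] lie in distinct [flip]-twisted classes: [(1, 2)] is not in the image
   of [1 - U] for any of the four integral [U] with [u1^2 + u2^2 = 1]. *)
Lemma flip_twisted_diagonal (u1 u2 b1 b2 N1 N2 : Z) (h : sdp) :
  u1 * u1 + u2 * u2 = 1 ->
  Sdp 0 N2 (2 * N2) 0 = sdp_mul h (sdp_mul (Sdp 0 N1 (2 * N1) 0) (sdp_inv (flip u1 u2 b1 b2 h))) ->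
  N1 = N2.
Proof.
  intros Hu E. destruct h as [hx hy hz hk].
  assert (Hk : hk = 0) by (apply (f_equal sk) in E; cbn in E; lia). subst hk.
  pose proof (f_equal sy E) as Ey. pose proof (f_equal sz E) as Ez.
  cbn [sx sy sz sk sdp_mul sdp_inv flip] in Ey, Ez.
  unfold rot_y, rot_z in Ey, Ez. rewrite ?Z.opp_0 in Ey, Ez.
  change (qcos 0) with 1 in Ey, Ez. change (qsin 0) with 0 in Ey, Ez.
  change (qcos_sum 0) with 0 in Ey, Ez. change (qsin_sum 0) with 0 in Ey, Ez.
  assert (Hc : (u1 = 0 /\ (u2 = 1 \/ u2 = -1)) \/ (u2 = 0 /\ (u1 = 1 \/ u1 = -1))) by nia.
  destruct Hc as [[-> [-> | ->]] | [-> [-> | ->]]]; lia.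
Qed.

Definition diag_word (N : nat) : word :=
  repeat (ee 0) N ++ [ea] ++ repeat (ee 0) (2 * N) ++ [linv ea].

Lemma proj_ev_diag_word (m : Z) (r : nat -> Z) (N : nat) :
  proj_yz (ev m r (diag_word N)) = Sdp 0 (Z.of_nat N) (2 * Z.of_nat N) 0.
Proof.
  unfold diag_word, ev. rewrite eval_app. fold (ev m r).
  rewrite (ev_conj_a m r _ (vscale (Z.of_nat (2 * N)) vec_e0)), (ev_repeat m r 0 false).
  - cbn [gmul sdp_group]. rewrite transl_mul. change (gen_vec m r 0) with vec_e0.
    apply sdp_ext; cbn [proj_yz transl sx sy sz sk va vb vc vadd vscale vtwist vec_e0];
      rewrite ?Nat2Z.inj_mul; change (Z.of_nat 2) with 2; ring.
  - apply (ev_repeat m r 0 false).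
Qed.

(** * Automorphisms *)

Section Automorphism.
Variables (m : Z) (xi : Zadic m) (f : word -> word).
Hypothesis hf : is_aut m xi f.

Local Notation r := (rfun m xi).
Local Notation ev := (ev m (rfun m xi)).

Definition ev_aut (w : word) : sdp_group := ev (f w).

Lemma ev_aut_word_hom : word_hom m r sdp_group ev_aut.
Proof.
  split.
  - intros u v Huv. apply (word_hom_resp (ev_word_hom m r)), (aut_wd _ _ _ hf), Huv.
  - intros u v. unfold ev_aut. rewrite <- (word_hom_app (ev_word_hom m r)).
    apply (word_hom_resp (ev_word_hom m r)), (aut_hom _ _ _ hf).
Qed.

Lemma ev_aut_surj (v : word) : exists u, ev_aut u = ev v.
Proof.
  destruct (aut_surj _ _ _ hf v) as [u Hu]. exists u.
  apply (word_hom_resp (ev_word_hom m r)), Hu.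
Qed.

Lemma ev_aut_twisted (gamma delta : word) :
  twisted_conj m xi f gamma delta ->
  exists g, ev delta = sdp_mul (ev g) (sdp_mul (ev gamma) (sdp_inv (ev_aut g))).
Proof.
  intros [g Hg]. exists g. rewrite (word_hom_resp (ev_word_hom m r) _ _ Hg).
  rewrite !(word_hom_app (ev_word_hom m r)), (word_hom_winv (ev_word_hom m r)). reflexivity.
Qed.

Lemma ev_aut_e_aff_commute (i : nat) : aff_commute (ev_aut [ee i]) (ev_aut [ee 0]).
Proof.
  apply aff_commute_of_commute.
  change (gmul (ev_aut [ee i]) (ev_aut [ee 0]) = gmul (ev_aut [ee 0]) (ev_aut [ee i])).
  rewrite <- !(word_hom_app ev_aut_word_hom).
  apply (word_hom_resp ev_aut_word_hom), bs_comm.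
Qed.

Lemma aff_commute_ev_aut_closed (z : sdp) (w : word) :
  (forall g, aff_commute (ev_aut [(g, false)]) z) -> aff_commute (ev_aut w) z.
Proof.
  intro Hgen. apply (word_hom_closed ev_aut_word_hom (fun g => aff_commute g z));
    [apply aff_commute_one | intros; apply aff_commute_mul; assumption
    | intros; apply aff_commute_inv; assumption | intros g b _; apply Hgen].
Qed.

Hypothesis hm : m <> 0.

(* If [x = phi(e_0)] had nonzero height, then with [z = phi(e_0^m)] and [y = phi(e_1) = phi(a) z
   phi(a)^-1], [y] and [z] have the same height and both share the fixed point of [x], so they
   are equal as affine maps and [phi(a)] commutes with [z]; thus the whole image fixes the fixed
   point of [z], although it contains the translation [ev e_0]. *)
Lemma height_ev_aut_e0 : sk (ev_aut [ee 0]) = 0.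
Proof.
  pose proof ev_aut_word_hom as hh.
  set (x := ev_aut [ee 0]). destruct (Z.eq_dec (sk x) 0) as [| Hx]; [assumption | exfalso].
  set (z := ev_aut (epow 0 m)).
  assert (Hz : aff_commute z x).
  { apply (word_hom_closed hh (fun g => aff_commute g x));
      [apply aff_commute_one | intros; apply aff_commute_mul; assumption
      | intros; apply aff_commute_inv; assumption |].
    intros g b Hin. apply in_epow in Hin. cbn in Hin. subst g. apply ev_aut_e_aff_commute. }
  assert (Hkz : sk z = m * sk x).
  { apply (word_hom_epow m r (fun w => sk (ev_aut w))), word_hom_comp; [exact hh | exact sk_hom]. }
  assert (Hkz0 : sk z <> 0) by (rewrite Hkz; apply Z.neq_mul_0; auto).
  set (a := ev_aut [ea]). set (y := ev_aut [ee 1]).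
  assert (Hy : sdp_mul a (sdp_mul z (sdp_inv a)) = y).
  { unfold y. rewrite <- (word_hom_resp hh _ _ (bs_eq_e1 m r)).
    rewrite !(word_hom_app hh), (word_hom_linv hh). reflexivity. }
  assert (Hky : sk y = sk z) by (rewrite <- Hy; cbn; ring).
  assert (Hxy : sx y = sx z)
    by exact (aff_commute_same_height x y z Hx (ev_aut_e_aff_commute 1) Hz Hky).
  assert (Haz : aff_commute a z).
  { assert (E : sdp_mul a z = sdp_mul y a)
      by (rewrite <- Hy, <- !sdp_mulA, sdp_mulVg, sdp_mulg1; reflexivity).
    apply (f_equal sx) in E. unfold aff_commute. cbn in E. rewrite Hxy, Hky in E. lra. }
  destruct (ev_aut_surj [ee 0]) as [w Hw].
  assert (Hall : aff_commute (ev_aut w) z).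
  { apply aff_commute_ev_aut_closed. intros [i |];
      [exact (aff_commute_trans x _ _ Hx (ev_aut_e_aff_commute i) Hz) | exact Haz]. }
  rewrite Hw in Hall. unfold aff_commute in Hall. cbn in Hall. rewrite p2_0 in Hall.
  apply Hkz0, p2_eq1. lra.
Qed.

Lemma height_ev_aut (w : word) : sk (ev_aut w) = sk (ev_aut [ea]) * sk (ev w).
Proof.
  set (c := sk (ev_aut [ea])).
  assert (Hmul : @group_hom Zadd_group Zadd_group (Z.mul c))
    by (intros a b; apply Z.mul_add_distr_l).
  apply (word_hom_ext m r Zadd_group (fun w => sk (ev_aut w)) (fun w => c * sk (ev w))).
  - exact (word_hom_comp _ _ _ _ _ _ ev_aut_word_hom sk_hom).
  - apply (word_hom_comp m r Zadd_group Zadd_group (fun w => sk (ev w))); [| exact Hmul].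
    exact (word_hom_comp _ _ _ _ _ _ (ev_word_hom m r) sk_hom).
  - change (sk (ev [ea])) with 1. exact (eq_sym (Z.mul_1_r c)).
  - rewrite height_ev_aut_e0. exact (eq_sym (Z.mul_0_r c)).
Qed.

Lemma height_ev_aut_ea : sk (ev_aut [ea]) = 1 \/ sk (ev_aut [ea]) = -1.
Proof.
  destruct (ev_aut_surj [ea]) as [w Hw].
  pose proof (height_ev_aut w) as E. rewrite Hw in E. change (sk (ev [ea])) with 1 in E.
  apply (Z.eq_mul_1 _ (sk (ev w))). symmetry. exact E.
Qed.

Definition twisted_separated (gamma : nat -> word) : Prop :=
  forall N1 N2 delta,
    twisted_conj m xi f (gamma N1) delta -> twisted_conj m xi f (gamma N2) delta -> N1 = N2.

Lemma twisted_separated_a_powers :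
  sk (ev_aut [ea]) = 1 -> twisted_separated (fun N => repeat ea N).
Proof.
  intro hc.
  assert (Hpow : forall N, sk (ev (repeat ea N)) = Z.of_nat N).
  { intro N. rewrite (word_hom_repeat m r (fun w => sk (ev w))).
    - cbn. ring.
    - exact (word_hom_comp _ _ _ _ _ _ (ev_word_hom m r) sk_hom). }
  assert (Hinv : forall gamma delta,
            twisted_conj m xi f gamma delta -> sk (ev delta) = sk (ev gamma)).
  { intros gamma delta Ht. destruct (ev_aut_twisted _ _ Ht) as [g ->]. cbn.
    rewrite height_ev_aut, hc. ring. }
  intros N1 N2 delta H1 H2. apply Hinv in H1, H2. rewrite Hpow in H1, H2. lia.
Qed.

Definition flip_aut : sdp_group -> sdp_group :=
  flip (sy (ev_aut [ee 0])) (sz (ev_aut [ee 0])) (sy (ev_aut [ea])) (sz (ev_aut [ea])).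

Lemma proj_ev_aut (w : word) : sk (ev_aut [ea]) = -1 -> proj_yz (ev_aut w) = flip_aut (ev w).
Proof.
  intro hc. revert w.
  apply (word_hom_ext m r sdp_group (fun w => proj_yz (ev_aut w)) (fun w => flip_aut (ev w))).
  - exact (word_hom_comp _ _ _ _ _ _ ev_aut_word_hom proj_yz_hom).
  - exact (word_hom_comp _ _ _ _ _ _ (ev_word_hom m r) (flip_hom _ _ _ _)).
  - cbn beta. rewrite ev_ea. apply sdp_ext; cbn; [reflexivity | | | exact hc];
      change (qcos_sum 1) with 1; change (qsin_sum 1) with 0; ring.
  - pose proof height_ev_aut_e0 as h0.
    cbn beta. rewrite ev_e0. apply sdp_ext; cbn; [reflexivity | | | exact h0];
      change (qcos_sum 0) with 0; change (qsin_sum 0) with 0; ring.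
Qed.

Lemma flip_aut_unit :
  sk (ev_aut [ea]) = -1 ->
  sy (ev_aut [ee 0]) * sy (ev_aut [ee 0]) + sz (ev_aut [ee 0]) * sz (ev_aut [ee 0]) = 1.
Proof.
  intro hc. destruct (ev_aut_surj [ee 0]) as [w Hw].
  pose proof (proj_ev_aut w hc) as E. rewrite Hw, ev_e0 in E. unfold flip_aut in E.
  set (u1 := sy (ev_aut [ee 0])) in *. set (u2 := sz (ev_aut [ee 0])) in *.
  set (b1 := sy (ev_aut [ea])) in *. set (b2 := sz (ev_aut [ea])) in *.
  set (p := ev w) in *.
  pose proof (f_equal sk E) as Ek. pose proof (f_equal sy E) as Ey. pose proof (f_equal sz E) as Ez.
  clearbody u1 u2 b1 b2 p. clear E.
  cbn [proj_yz flip transl sx sy sz sk va vb vc vec_e0] in Ek, Ey, Ez.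
  assert (Hk : sk p = 0) by lia. rewrite Hk in Ey, Ez.
  change (qcos_sum 0) with 0 in Ey, Ez. change (qsin_sum 0) with 0 in Ey, Ez.
  (* [U (y, z) = (1, 0)] with [U^2 = (u1^2 + u2^2) I]. *)
  assert (E2 : (u1 * u1 + u2 * u2) * (sy p * sy p + sz p * sz p) = 1) by nia.
  apply Z.eq_mul_1_nonneg in E2; [tauto |].
  pose proof (Z.square_nonneg u1). pose proof (Z.square_nonneg u2). lia.
Qed.

Lemma proj_ev_twisted (gamma delta : word) :
  sk (ev_aut [ea]) = -1 -> twisted_conj m xi f gamma delta ->
  exists b : sdp_group,
    proj_yz (ev delta) = gmul b (gmul (proj_yz (ev gamma)) (ginv (flip_aut b))).
Proof.
  intros hc Ht. destruct (ev_aut_twisted _ _ Ht) as [g E]. exists (proj_yz (ev g)).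
  change (proj_yz (ev delta) = gmul (proj_yz (ev g)) (gmul (proj_yz (ev gamma))
    (ginv (flip_aut (ev g))))).
  rewrite <- (proj_ev_aut g hc), <- (hom_inv proj_yz _ proj_yz_hom), <- !proj_yz_hom.
  f_equal. exact E.
Qed.

Lemma twisted_separated_diag_word :
  sk (ev_aut [ea]) = -1 -> twisted_separated diag_word.
Proof.
  intros hc N1 N2 delta H1 H2.
  destruct (proj_ev_twisted _ _ hc H1) as [b1 E1]. destruct (proj_ev_twisted _ _ hc H2) as [b2 E2].
  rewrite E1, !proj_ev_diag_word in E2.
  apply twisted_conj_shift in E2; [| apply flip_hom].
  apply Nat2Z.inj. exact (flip_twisted_diagonal _ _ _ _ _ _ _ (flip_aut_unit hc) E2).
Qed.

End Automorphism.

Lemma avoid_list_of_separated (T : word -> word -> Prop) (gamma : nat -> word) :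
  (forall N1 N2 delta, T (gamma N1) delta -> T (gamma N2) delta -> N1 = N2) ->
  forall L : list word, exists N, forall delta, In delta L -> ~ T (gamma N) delta.
Proof.
  intros Hsep L.
  assert (Hbound : exists B,
            forall N, (B <= N)%nat -> forall delta, In delta L -> ~ T (gamma N) delta).
  { induction L as [| d L [B IH]].
    - exists 0%nat. intros N _ d [].
    - destruct (classic (exists N0, T (gamma N0) d)) as [[N0 H0] | Hnone].
      + exists (Nat.max B (S N0)). intros N HN d' [<- | Hin] Ht.
        * pose proof (Hsep _ _ _ H0 Ht). lia.
        * exact (IH N ltac:(lia) d' Hin Ht).
      + exists B. intros N HN d' [<- | Hin] Ht.
        * apply Hnone. exists N. exact Ht.
        * exact (IH N HN d' Hin Ht). }
  destruct Hbound as [B HB]. exists B. apply HB. lia.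
Qed.

Theorem corollary5p3 (m : Z) (hm : m <> 0%Z) (xi : Zadic m) (f : word -> word)
  (hf : is_aut m xi f) :
  forall L : list word, exists gamma : word,
    forall delta : word, In delta L -> ~ twisted_conj m xi f gamma delta.
Proof.
  intro L.
  destruct (height_ev_aut_ea m xi f hf hm) as [hc | hc].
  - pose proof (twisted_separated_a_powers m xi f hf hm hc) as Hsep.
    destruct (avoid_list_of_separated _ _ Hsep L) as [N HN]. exists (repeat ea N). exact HN.
  - pose proof (twisted_separated_diag_word m xi f hf hm hc) as Hsep.
    destruct (avoid_list_of_separated _ _ Hsep L) as [N HN]. exists (diag_word N). exact HN.
Qed.
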